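(* Let $n,m$ be integers with $6 \le n \le m \le 2n-2$ and $m \ne 2n-5$. If $n+m \equiv 1 \pmod 3$, then \[\gamma^{\rm ID}(K_n\times K_m) = \left\lceil \frac{2m+2n}{3}\right\rceil.\]
   Context: For a graph $G$ and vertex $x$, $N[x]$ denotes the closed neighborhood of $x$. A set $C \subseteq V(G)$ is an identifying code (ID code) of $G$ if $C$ is a dominating set of $G$ and $N[x]\cap C \ne N[y]\cap C$ for every pair of distinct vertices $x,y$. $\gamma^{\rm ID}(G)$ is the minimum cardinality of an ID code of $G$. The direct product $G_1\times G_2$ has vertex set $V(G_1)\times V(G_2)$, with $(u_1,u_2)$ adjacent to $(v_1,v_2)$ iff $u_1v_1\in E(G_1)$ and $u_2v_2 \in E(G_2)$. $K_n$ is the complete graph on vertex set $[n]=\{1,\dots,n\}$; thus in $K_n\times K_m$ two vertices are adjacent iff they differ in both coordinates. *)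

From mathcomp Require Import all_boot.
Set Implicit Arguments. Unset Strict Implicit. Unset Printing Implicit Defensive.

Definition closed_nbhd (T : finType) (adj : rel T) (x : T) : {set T} :=
  [set y | (y == x) || adj x y].

Definition is_idcode (T : finType) (adj : rel T) (C : {set T}) : bool :=
  [forall x, closed_nbhd adj x :&: C != set0] &&
  [forall x, forall y, (x != y) ==> (closed_nbhd adj x :&: C != closed_nbhd adj y :&: C)].

(* gamma^ID(G): minimum cardinality of an ID code (the default #|T|+1 is only
   reached when G has no ID code, which is not the case in our application). *)
Definition gammaID (T : finType) (adj : rel T) : nat :=
  \big[minn/#|T|.+1]_(C : {set T} | is_idcode adj C) #|C|.

Definition KxK_adj (n m : nat) : rel ('I_n * 'I_m) :=
  fun u v => (u.1 != v.1) && (u.2 != v.2).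

From mathcomp Require Import all_boot zify.
Set Implicit Arguments. Unset Strict Implicit. Unset Printing Implicit Defensive.

(* A vertex set C of K_n x K_m is read as a 0/1 pattern p on the n x m grid:
   p i j holds iff (i, j) is in C.  Since z is in N[x] iff z and x agree in
   both or in no coordinate, two vertices x, y have the same trace on C iff C
   avoids the symmetric difference of N[x] and N[y]; computing it shows that C
   is an identifying code iff it dominates, at most one row and at most one
   column of p are empty, and p is box-free: for i <> k, j <> l some point of p
   in rows i, k or columns j, l lies outside the box {i, k} x {j, l}.
   Lower bound: double counting the points of p by the degrees of their row and
   column gives linear identities between line and point statistics; box-freeness
   bounds the few degenerate configurations (empty lines, isolated points, a
   single "crossing" point), and linear arithmetic with the hypotheses on n, m
   yields 2(n + m) <= 3|C| + 1.
   Upper bound: with n = x + 2y + 1 and m = 2x + y + 3, an explicit disjoint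
   union of stars with 2x + 2y + 3 points satisfies the characterization. *)

Definition transpose (I J : finType) (p : I -> J -> bool) : J -> I -> bool :=
  fun j i => p i j.

Definition deg (I J : finType) (p : I -> J -> bool) (i : I) : nat :=
  \sum_j (p i j : nat).

Lemma sum_boolE (T : finType) (F : pred T) : \sum_z (F z : nat) = #|F|.
Proof.
rewrite -sum1_card [RHS]big_mkcond; apply: eq_bigr => z _.
by rewrite unfold_in; case: (F z).
Qed.

Section Degrees.
Variables (I J : finType) (p : I -> J -> bool).

Lemma degE i : deg p i = #|p i|.
Proof. exact: sum_boolE. Qed.

Lemma deg_gt0 i j : p i j -> 0 < deg p i.
Proof. by move=> pij; rewrite /deg (bigD1 j) //= pij. Qed.

Lemma deg_tr_gt0 i j : p i j -> 0 < deg (transpose p) j.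
Proof. by move=> pij; rewrite /deg (bigD1 i) //= /transpose pij. Qed.

Lemma deg_eq0P i : reflect (forall c, ~~ p i c) (deg p i == 0).
Proof.
rewrite /deg sum_nat_eq0; apply: (iffP forallP) => [p0 c | p0 c].
  by have := p0 c; case: (p i c).
by rewrite (negbTE (p0 c)).
Qed.

Lemma deg0P i c : deg p i = 0 -> ~~ p i c.
Proof. by move/eqP/deg_eq0P. Qed.

Lemma deg1P i j c : deg p i = 1 -> p i j -> p i c -> c = j.
Proof.
rewrite degE => /eqP /card1P [x px] pij pic.
by move: (px j) (px c); rewrite !unfold_in /= pij pic => /esym /eqP -> /esym /eqP ->.
Qed.

Lemma deg2P i j l c :
  deg p i = 2 -> j != l -> p i j -> p i l -> p i c -> (c == j) || (c == l).
Proof.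
rewrite degE => pi2 njl pij pil pic; apply/negPn/negP; rewrite negb_or => /andP[ncj ncl].
have : 2 < #|p i|.
  by apply/card_gt2P; exists j, l, c; rewrite !unfold_in; do !split => //; rewrite eq_sym.
by rewrite pi2.
Qed.

Lemma deg2_other i j : deg p i = 2 -> p i j -> exists2 l, l != j & p i l.
Proof.
rewrite degE => pi2 pij; have /card_gt1P [x [y [px py nxy]]] : 1 < #|p i| by rewrite pi2.
by case: (eqVneq x j) => [exj|]; [exists y; rewrite // -exj eq_sym | exists x].
Qed.

Lemma deg_eq1 i j : p i j -> (forall c, p i c -> c = j) -> deg p i = 1.
Proof.
move=> pij uniqj; apply/eqP; rewrite degE; apply/card1P; exists j => c.
by rewrite !unfold_in /=; apply/idP/eqP => [/uniqj | ->].
Qed.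

Lemma deg_gt1 i j c : p i j -> p i c -> c != j -> 1 < deg p i.
Proof. by move=> pij pic ncj; rewrite degE; apply/card_gt1P; exists c, j; rewrite !unfold_in. Qed.

Lemma deg_closed i j l : j != l -> (forall c, p i c -> (c == j) || (c == l)) ->
  deg p i = p i j + p i l.
Proof.
move=> njl rowi; rewrite /deg (bigD1 j) // (bigD1 l) /= ?(eq_sym l) // big1 ?addn0 //.
move=> c /andP[ncj ncl]; apply/eqP; rewrite eqb0; apply: contraNN ncj => pic.
by have := rowi c pic; rewrite (negbTE ncl) orbF.
Qed.

End Degrees.

Definition npoints (I J : finType) (p : I -> J -> bool) : nat := \sum_i deg p i.
Definition empties (I J : finType) (p : I -> J -> bool) : nat := \sum_i (deg p i == 0 : nat).
Definition singles (I J : finType) (p : I -> J -> bool) : nat := \sum_i (deg p i == 1 : nat).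
Definition doubles (I J : finType) (p : I -> J -> bool) : nat := \sum_i (deg p i == 2 : nat).
Definition crowded (I J : finType) (p : I -> J -> bool) : nat := \sum_i (2 < deg p i : nat).
Definition excess (I J : finType) (p : I -> J -> bool) : nat := \sum_i (deg p i - 2).

Definition point_count (I J : finType) (p : I -> J -> bool) (P : nat -> nat -> bool) : nat :=
  \sum_i \sum_j (p i j && P (deg p i) (deg (transpose p) j) : nat).

Definition isolated (I J : finType) (p : I -> J -> bool) : nat :=
  point_count p (fun r c => (r == 1) && (c == 1)).
Definition crossings (I J : finType) (p : I -> J -> bool) : nat :=
  point_count p (fun r c => (1 < r) && (1 < c)).
Definition leaves2 (I J : finType) (p : I -> J -> bool) : nat :=
  point_count p (fun r c => (r == 2) && (c == 1)).
Definition leaves3 (I J : finType) (p : I -> J -> bool) : nat :=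
  point_count p (fun r c => (2 < r) && (c == 1)).

Section Counting.
Variables (I J : finType) (p : I -> J -> bool).

Lemma sum_points_row (F : I -> nat) :
  \sum_i \sum_j (p i j * F i) = \sum_i deg p i * F i.
Proof. by apply: eq_bigr => i _; rewrite /deg big_distrl. Qed.

Lemma sum_points_col (F : J -> nat) :
  \sum_i \sum_j (p i j * F j) = \sum_j deg (transpose p) j * F j.
Proof. by rewrite exchange_big; apply: eq_bigr => j _; rewrite /deg big_distrl. Qed.

Lemma card_lines : #|I| = empties p + singles p + doubles p + crowded p.
Proof.
rewrite -sum1_card -!big_split /=; apply: eq_bigr => i _.
by case: (deg p i) => [|[|[|d]]].
Qed.

Lemma npoints_lines : npoints p = singles p + 2 * doubles p + 2 * crowded p + excess p.
Proof. by rewrite /npoints !big_distrr -!big_split /=; apply: eq_bigr => i _; lia. Qed.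

Lemma singles_points : singles p = \sum_i \sum_j (p i j * (deg p i == 1)).
Proof. by rewrite sum_points_row; apply: eq_bigr => i _; lia. Qed.

Lemma singles_tr_points :
  singles (transpose p) = \sum_i \sum_j (p i j * (deg (transpose p) j == 1)).
Proof. by rewrite sum_points_col; apply: eq_bigr => j _; lia. Qed.

(* Each point is counted once per line in which it is alone; isolated points
   twice, crossings never. *)
Lemma npoints_isolated :
  npoints p + isolated p = singles p + singles (transpose p) + crossings p.
Proof.
rewrite singles_points singles_tr_points -!big_split /=; apply: eq_bigr => i _.
rewrite /deg -!big_split /=; apply: eq_bigr => j _.
case pij: (p i j) => //=; have := deg_gt0 pij; have := deg_tr_gt0 pij; rewrite /deg; lia.
Qed.

(* Columns of degree 1 are classified by the degree of the row of their point. *)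
Lemma singles_tr_leaves :
  singles (transpose p) = isolated p + leaves2 p + leaves3 p.
Proof.
rewrite singles_tr_points -!big_split /=; apply: eq_bigr => i _.
rewrite -!big_split /=; apply: eq_bigr => j _.
by case pij: (p i j) => //=; have := deg_gt0 pij; lia.
Qed.

Lemma leaves2_le : leaves2 p <= 2 * doubles p.
Proof.
apply: (@leq_trans (\sum_i \sum_j (p i j * (deg p i == 2)))).
  by apply: leq_sum => i _; apply: leq_sum => j _; case: (p i j) => /=; lia.
by rewrite sum_points_row big_distrr; apply: leq_sum => i _ /=; lia.
Qed.

Lemma leaves3_le : leaves3 p <= 2 * crowded p + excess p.
Proof.
apply: (@leq_trans (\sum_i \sum_j (p i j * (2 < deg p i)))).
  by apply: leq_sum => i _; apply: leq_sum => j _; case: (p i j) => /=; lia.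
rewrite sum_points_row big_distrr -big_split; apply: leq_sum => i _ /=; lia.
Qed.

Lemma crowded_le_excess : crowded p <= excess p.
Proof. by apply: leq_sum => i _; lia. Qed.

Lemma excess_eq0 : crowded p = 0 -> excess p = 0.
Proof.
rewrite /crowded /excess => /eqP; rewrite sum_nat_eq0 => /forallP crowded0.
by apply/eqP; rewrite sum_nat_eq0; apply/forallP => i; have := crowded0 i; lia.
Qed.

Lemma excess0_deg i : excess p = 0 -> deg p i <= 2.
Proof. by move/eqP; rewrite sum_nat_eq0 => /forallP /(_ i); lia. Qed.

Lemma empty_line : 0 < empties p -> exists i, deg p i = 0.
Proof. by rewrite /empties sum_boolE => /card_gt0P [i]; rewrite unfold_in => /eqP; exists i. Qed.

Lemma point_countE (P : nat -> nat -> bool) :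
  point_count p P = #|[pred z : I * J | p z.1 z.2 && P (deg p z.1) (deg (transpose p) z.2)]|.
Proof. by rewrite /point_count pair_bigA -sum_boolE. Qed.

End Counting.

Lemma point_count_tr (I J : finType) (p : I -> J -> bool) (P : nat -> nat -> bool) :
  point_count (transpose p) P = point_count p (fun r c => P c r).
Proof. by rewrite /point_count exchange_big. Qed.

Lemma npoints_tr (I J : finType) (p : I -> J -> bool) : npoints (transpose p) = npoints p.
Proof. by rewrite /npoints /deg exchange_big. Qed.

Lemma isolated_tr (I J : finType) (p : I -> J -> bool) : isolated (transpose p) = isolated p.
Proof.
rewrite /isolated point_count_tr /point_count.
by apply: eq_bigr => i _; apply: eq_bigr => j _; rewrite [X in _ && X]andbC.
Qed.

Definition closed_box (I J : finType) (p : I -> J -> bool) i k j l : Prop :=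
  [/\ forall r, p r j -> (r == i) || (r == k), forall r, p r l -> (r == i) || (r == k),
      forall c, p i c -> (c == j) || (c == l) & forall c, p k c -> (c == j) || (c == l)].

Definition box_free (I J : finType) (p : I -> J -> bool) : Prop :=
  forall i k j l, i != k -> j != l -> ~ closed_box p i k j l.

Definition unique_empty (I J : finType) (p : I -> J -> bool) : Prop :=
  forall i k, deg p i = 0 -> deg p k = 0 -> i = k.

Lemma box_free_tr (I J : finType) (p : I -> J -> bool) : box_free p -> box_free (transpose p).
Proof. by move=> boxp j l i k njl nik [? ? ? ?]; apply: (boxp i k j l). Qed.

Section BoxFree.
Variables (I J : finType) (p : I -> J -> bool).

Lemma empties_le1 : unique_empty p -> empties p <= 1.
Proof.
move=> uniqp; rewrite /empties sum_boolE leqNgt; apply/card_gt1P => -[i [k []]].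
by rewrite !unfold_in => /eqP di /eqP dk; rewrite (uniqp i k di dk) eqxx.
Qed.

(* Two isolated points would close the box they span. *)
Lemma isolated_le1 : box_free p -> isolated p <= 1.
Proof.
move=> boxp; rewrite /isolated point_countE leqNgt; apply/card_gt1P => -[[i j] [[k l] []]].
rewrite !inE /= => /andP[pij /andP[/eqP ri /eqP cj]] /andP[pkl /andP[/eqP rk /eqP cl]] nz.
have colj r : p r j -> r = i by move=> prj; apply: (@deg1P _ _ (transpose p) j i r).
have coll r : p r l -> r = k by move=> prl; apply: (@deg1P _ _ (transpose p) l k r).
have rowi c : p i c -> c = j by move=> pic; apply: (deg1P ri).
have rowk c : p k c -> c = l by move=> pkc; apply: (deg1P rk).
have nik : i != k by apply: contraNneq nz => eik; rewrite -eik in pkl *; rewrite (rowi l pkl).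
have njl : j != l by apply: contraNneq nz => ejl; rewrite -ejl in pkl *; rewrite (colj k pkl).
apply: (boxp i k j l nik njl); split.
- by move=> r /colj ->; rewrite eqxx.
- by move=> r /coll ->; rewrite eqxx orbT.
- by move=> c /rowi ->; rewrite eqxx.
- by move=> c /rowk ->; rewrite eqxx orbT.
Qed.

(* An isolated point, an empty row and an empty column close a box. *)
Lemma isolated_eq0 :
  box_free p -> 0 < empties p -> 0 < empties (transpose p) -> isolated p = 0.
Proof.
move=> boxp /empty_line [i0 row0] /empty_line [j0 col0].
apply/eqP; rewrite /isolated point_countE -leqn0 leqNgt; apply/card_gt0P => -[[i j]].
rewrite !inE /= => /andP[pij /andP[/eqP ri /eqP cj]].
have ni0 : i0 != i by apply: contraTneq pij => <-; apply: deg0P.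
have nj0 : j0 != j by apply: contraTneq pij => <-; apply: (@deg0P _ _ (transpose p)).
apply: (boxp i0 i j0 j ni0 nj0); split.
- by move=> r prj0; have := @deg0P _ _ (transpose p) j0 r col0; rewrite /transpose prj0.
- by move=> r prj; rewrite (@deg1P _ _ (transpose p) j i r) ?eqxx ?orbT.
- by move=> c pi0c; have := deg0P c row0; rewrite pi0c.
- by move=> c pic; rewrite (deg1P ri pij pic) eqxx orbT.
Qed.

Lemma leaves2_le_doubles : box_free p -> 0 < empties p -> leaves2 p <= doubles p.
Proof.
move=> boxp /empty_line [i0 row0]; apply: leq_sum => i _.
have [ri|_] := eqVneq (deg p i) 2; last by rewrite big1 // => j _; rewrite andbF.
rewrite sum_boolE leqNgt; apply/card_gt1P => -[j [l []]].
rewrite !unfold_in /= => /andP[pij /eqP cj] /andP[pil /eqP cl] njl.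
have ni0 : i0 != i by apply: contraTneq pij => <-; apply: deg0P.
apply: (boxp i0 i j l ni0 njl); split.
- by move=> r prj; rewrite (@deg1P _ _ (transpose p) j i r) ?eqxx ?orbT.
- by move=> r prl; rewrite (@deg1P _ _ (transpose p) l i r) ?eqxx ?orbT.
- by move=> c pi0c; have := deg0P c row0; rewrite pi0c.
- by move=> c; apply: deg2P.
Qed.

(* When all lines have degree <= 2, a unique crossing (i, j) closes the box
   spanned by its row-neighbour and its column-neighbour. *)
Lemma crossings_neq1 :
  box_free p -> excess p = 0 -> excess (transpose p) = 0 -> crossings p <> 1.
Proof.
move=> boxp ex0 ex0' /eqP; rewrite /crossings point_countE => /card1P [[i j] crossE].
have := crossE (i, j); rewrite !inE /= eqxx => /andP[pij /andP[ri cj]].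
have {}ri : deg p i = 2 by have := excess0_deg i ex0; lia.
have {}cj : deg (transpose p) j = 2.
  by have := @excess0_deg _ _ (transpose p) j ex0'; lia.
have [l nlj pil] := deg2_other ri pij.
have [k nki /= pkj] := @deg2_other _ _ (transpose p) j i cj pij.
rewrite /transpose in pkj.
have cl : deg (transpose p) l = 1.
  have := crossE (i, l); rewrite !inE /= xpair_eqE eqxx (negbTE nlj) pil ri /=.
  by have := deg_tr_gt0 pil; lia.
have rk : deg p k = 1.
  have := crossE (k, j); rewrite !inE /= xpair_eqE eqxx (negbTE nki) pkj cj /= andbT.
  by have := deg_gt0 pkj; lia.
apply: (boxp i k j l); rewrite 1?eq_sym //; split.
- by move=> r; apply: (@deg2P _ _ (transpose p) j i k r cj); rewrite // eq_sym.
- by move=> r prl; rewrite (@deg1P _ _ (transpose p) l i r) ?eqxx.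
- by move=> c; apply: (deg2P ri); rewrite // eq_sym.
- by move=> c pkc; rewrite (deg1P rk pkj pkc) eqxx.
Qed.

End BoxFree.

Lemma pattern_lower_bound (I J : finType) (p : I -> J -> bool) :
  box_free p -> unique_empty p -> unique_empty (transpose p) ->
  6 <= #|I| -> #|I| <= #|J| -> #|J| <= 2 * #|I| - 2 -> #|J| != 2 * #|I| - 5 ->
  (#|I| + #|J|) %% 3 = 1 -> 2 * (#|I| + #|J|) <= 3 * npoints p + 1.
Proof.
move=> boxp uniq_rows uniq_cols.
have boxpT : box_free (transpose p) := box_free_tr boxp.
have emp1 := empties_le1 uniq_rows; have emp1T := empties_le1 uniq_cols.
have iso1 := isolated_le1 boxp.
have emp_iso : empties p + empties (transpose p) + isolated p <= 2.
  case: (posnP (empties p)) => [-> | e0]; first by lia.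
  case: (posnP (empties (transpose p))) => [-> | e0']; first by lia.
  by rewrite isolated_eq0 //; lia.
have leaves2_emp : empties p = 1 -> leaves2 p <= doubles p.
  by move=> e1; apply: leaves2_le_doubles => //; rewrite e1.
have leaves2_empT : empties (transpose p) = 1 -> leaves2 (transpose p) <= doubles (transpose p).
  by move=> e1; apply: leaves2_le_doubles => //; rewrite e1.
have cross1 := crossings_neq1 boxp.
have lines := card_lines p; have linesT := card_lines (transpose p).
have pts := npoints_lines p; have ptsT := npoints_lines (transpose p).
rewrite npoints_tr in ptsT.
have pts_iso := npoints_isolated p.
have cr := crowded_le_excess p; have crT := crowded_le_excess (transpose p).
have ex := @excess_eq0 _ _ p; have exT := @excess_eq0 _ _ (transpose p).
have singT := singles_tr_leaves p.
have sing : singles p = isolated (transpose p) + leaves2 (transpose p) + leaves3 (transpose p).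
  exact: singles_tr_leaves (transpose p).
rewrite isolated_tr in sing.
have l2 := leaves2_le p; have l2T := leaves2_le (transpose p).
have l3 := leaves3_le p; have l3T := leaves3_le (transpose p).
lia.
Qed.

(* Every point is alone in exactly one of its two lines: p is a disjoint union
   of stars with at least two leaves each. *)
Definition star_forest (I J : finType) (p : I -> J -> bool) : Prop :=
  forall i j, p i j -> (deg p i == 1) != (deg (transpose p) j == 1).

(* In a closed box the four line degrees are read off the four corners, and no
   corner configuration covers all four lines by stars. *)
Lemma star_forest_box_free (I J : finType) (p : I -> J -> bool) :
  (forall i, 0 < deg p i) -> (forall j, 0 < deg (transpose p) j) -> star_forest p ->
  box_free p.
Proof.
move=> rows cols star i k j l nik njl [colj coll rowi rowk].
have di := deg_closed njl rowi; have dk := deg_closed njl rowk.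
have dj := @deg_closed _ _ (transpose p) j i k nik colj.
have dl := @deg_closed _ _ (transpose p) l i k nik coll.
move: (rows i) (rows k) (cols j) (cols l) (star i j) (star i l) (star k j) (star k l).
rewrite di dk dj dl /transpose.
move=> + + + + /implyP + /implyP + /implyP + /implyP.
by case: (p i j); case: (p i l); case: (p k j); case: (p k l) => *.
Qed.

(* Boolean forms of "N[x] and N[y] agree at z", where z in N[(i, j)] is
   ((z.1 == i) == (z.2 == j)): for twins in a row, in a column, and in a box. *)
Lemma twin_rows_bool (a b t : bool) :
  ~~ (a && b) -> ((a == t) == (b == t)) = ~~ a && ~~ b.
Proof. by case: a; case: b; case: t. Qed.

Lemma twin_cols_bool (t c d : bool) :
  ~~ (c && d) -> ((t == c) == (t == d)) = ~~ c && ~~ d.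
Proof. by case: t; case: c; case: d. Qed.

Lemma twin_box_bool (a b c d : bool) : ~~ (a && b) -> ~~ (c && d) ->
  ((a == c) == (b == d)) = [&& c ==> a || b, d ==> a || b, a ==> c || d & b ==> c || d].
Proof. by case: a; case: b; case: c; case: d. Qed.

Lemma eq_both (T : eqType) (x a b : T) : a != b -> ~~ ((x == a) && (x == b)).
Proof. by apply: contra => /andP[/eqP <- /eqP ->]. Qed.

Definition pattern n m (C : {set 'I_n * 'I_m}) : 'I_n -> 'I_m -> bool :=
  fun i j => (i, j) \in C.

Section KxK.
Variables (n m : nat) (C : {set 'I_n * 'I_m}).
Local Notation N := (closed_nbhd (@KxK_adj n m)).
Local Notation p := (pattern C).

Lemma KxK_nbhdE x z : (z \in N x) = ((z.1 == x.1) == (z.2 == x.2)).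
Proof.
case: x z => [i j] [r c]; rewrite !inE /KxK_adj xpair_eqE /= (eq_sym i) (eq_sym j).
by case: (r == i); case: (c == j).
Qed.

Lemma npoints_pattern : npoints p = #|C|.
Proof. by rewrite /npoints /deg pair_bigA sum_boolE; apply: eq_card => -[i j]. Qed.

Lemma twinsP x y :
  reflect (forall z, z \in C -> (z \in N x) = (z \in N y)) (N x :&: C == N y :&: C).
Proof.
apply: (iffP eqP) => [E z zC | E].
  by move/setP: E => /(_ z); rewrite !in_setI zC !andbT.
by apply/setP => z; rewrite !in_setI; case zC: (z \in C); rewrite ?andbF // !andbT E.
Qed.

Lemma row_twins i k j : i != k ->
  (N (i, j) :&: C == N (k, j) :&: C) = (deg p i == 0) && (deg p k == 0).
Proof.
move=> nik; have twinE z : ((z \in N (i, j)) == (z \in N (k, j))) = (z.1 != i) && (z.1 != k).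
  by rewrite !KxK_nbhdE twin_rows_bool ?eq_both.
apply/twinsP/andP => [E | [/deg_eq0P rowi /deg_eq0P rowk] [r c] zC].
  by split; apply/deg_eq0P => c; apply/negP => /E/eqP; rewrite twinE /= eqxx ?andbF.
apply/eqP; rewrite twinE /=; apply/andP; split; apply: contraTneq zC => ->.
  exact: rowi.
exact: rowk.
Qed.

Lemma col_twins i j l : j != l ->
  (N (i, j) :&: C == N (i, l) :&: C) =
  (deg (transpose p) j == 0) && (deg (transpose p) l == 0).
Proof.
move=> njl; have twinE z : ((z \in N (i, j)) == (z \in N (i, l))) = (z.2 != j) && (z.2 != l).
  by rewrite !KxK_nbhdE twin_cols_bool ?eq_both.
apply/twinsP/andP => [E | [/deg_eq0P colj /deg_eq0P coll] [r c] zC].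
  by split; apply/deg_eq0P => r; apply/negP => /E/eqP; rewrite twinE /= eqxx ?andbF.
apply/eqP; rewrite twinE /=; apply/andP; split; apply: contraTneq zC => ->.
  exact: colj.
exact: coll.
Qed.

Lemma box_twins i k j l : i != k -> j != l ->
  reflect (closed_box p i k j l) (N (i, j) :&: C == N (k, l) :&: C).
Proof.
move=> nik njl.
have twinE z : ((z \in N (i, j)) == (z \in N (k, l))) =
    [&& (z.2 == j) ==> (z.1 == i) || (z.1 == k), (z.2 == l) ==> (z.1 == i) || (z.1 == k),
        (z.1 == i) ==> (z.2 == j) || (z.2 == l) & (z.1 == k) ==> (z.2 == j) || (z.2 == l)].
  by rewrite !KxK_nbhdE twin_box_bool ?eq_both.
apply: (iffP (twinsP _ _)) => [E | [colj coll rowi rowk] [r c] zC].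
  have twinC z : z \in C -> (z \in N (i, j)) == (z \in N (k, l)) by move/E ->.
  by split=> [r|r|c|c] /twinC; rewrite twinE => /and4P[]; rewrite /= eqxx /= => *.
apply/eqP; rewrite twinE /=; apply/and4P; split; apply/implyP => /eqP e; rewrite e in zC.
- exact: colj.
- exact: coll.
- exact: rowi.
- exact: rowk.
Qed.

Lemma separationP (i0 : 'I_n) (j0 : 'I_m) :
  (forall x y, x != y -> N x :&: C != N y :&: C) <->
  [/\ unique_empty p, unique_empty (transpose p) & box_free p].
Proof.
split=> [sep | [uniq_rows uniq_cols boxp] [i j] [k l] nxy].
  split.
  - move=> i k di dk; apply/eqP/negPn/negP => nik.
    have := sep (i, j0) (k, j0); rewrite xpair_eqE negb_and nik row_twins // di dk.
    by move/(_ isT).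
  - move=> j l dj dl; apply/eqP/negPn/negP => njl.
    have := sep (i0, j) (i0, l); rewrite xpair_eqE negb_and njl orbT col_twins // dj dl.
    by move/(_ isT).
  - move=> i k j l nik njl /(box_twins nik njl) twins.
    by have := sep (i, j) (k, l); rewrite xpair_eqE negb_and nik twins => /(_ isT).
have [eik|nik] := eqVneq i k.
  rewrite -eik col_twins; last by move: nxy; rewrite eik xpair_eqE eqxx.
  apply/negP => /andP[/eqP dj /eqP dl]; move: nxy; rewrite eik (uniq_cols j l dj dl).
  by rewrite eqxx.
have [ejl|njl] := eqVneq j l.
  rewrite -ejl row_twins //; apply/negP => /andP[/eqP di /eqP dk].
  by move: nik; rewrite (uniq_rows i k di dk) eqxx.
by apply/(box_twins nik njl)/boxp.
Qed.

Lemma KxK_idcodeP (i0 : 'I_n) (j0 : 'I_m) :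
  is_idcode (@KxK_adj n m) C <->
  [/\ forall x, N x :&: C != set0, unique_empty p, unique_empty (transpose p) & box_free p].
Proof.
split => [/andP[/forallP dom /forallP sep] | [dom uniq_rows uniq_cols boxp]].
  have [] // := (separationP i0 j0).1 => x y; exact: (implyP (forallP (sep x) y)).
have sep := (separationP i0 j0).2 (And3 uniq_rows uniq_cols boxp).
by apply/andP; split; apply/forallP => // x; apply/forallP => y; apply/implyP/sep.
Qed.

End KxK.

Lemma KxK_idcode_lower_bound n m (C : {set 'I_n * 'I_m}) :
  is_idcode (@KxK_adj n m) C ->
  6 <= n -> n <= m -> m <= 2 * n - 2 -> m != 2 * n - 5 ->
  (n + m) %% 3 = 1 -> 2 * (n + m) <= 3 * #|C| + 1.
Proof.
move=> codeC n6 le_nm; have lt0n : 0 < n by lia.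
have lt0m : 0 < m by lia.
have [_ uniq_rows uniq_cols boxp] := (KxK_idcodeP C (Ordinal lt0n) (Ordinal lt0m)).1 codeC.
by have := pattern_lower_bound boxp uniq_rows uniq_cols; rewrite !card_ord npoints_pattern; apply.
Qed.

(* The extremal code: row 0 is a star with leaves in columns 0, 1, 2; row i in
   1..x is a star with leaves in columns 2i+1, 2i+2; the remaining rows come in
   pairs x+2t+1, x+2t+2 forming the star of column 2x+3+t. *)
Definition star_code (x i j : nat) : bool :=
  [|| (i == 0) && (j < 3), (0 < i <= x) && ((j == 2 * i + 1) || (j == 2 * i + 2))
    | (x < i) && (j == 3 + 2 * x + (i - x - 1) %/ 2)].

Section StarCode.
Variables (n m x y : nat).
Hypotheses (def_n : n = x + 2 * y + 1) (def_m : m = 2 * x + y + 3).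

Definition star_set : {set 'I_n * 'I_m} := [set z : 'I_n * 'I_m | star_code x z.1 z.2].
Local Notation p := (pattern star_set).

Lemma star_setE i j : p i j = star_code x i j.
Proof. by rewrite /pattern inE. Qed.

Lemma star_rows_nonempty i : 0 < deg p i.
Proof.
have lt_in := ltn_ord i.
suff [j pij] : exists j : 'I_m, p i j by exact: deg_gt0 pij.
have [le_ix | lt_xi] := leqP i x.
  have lt_jm : (i != 0 :> nat) * (2 * i + 1) < m by lia.
  by exists (Ordinal lt_jm); rewrite star_setE /star_code /=; lia.
have lt_jm : 3 + 2 * x + (i - x - 1) %/ 2 < m by lia.
by exists (Ordinal lt_jm); rewrite star_setE /star_code /=; lia.
Qed.

Lemma star_cols_nonempty j : 0 < deg (transpose p) j.
Proof.
have lt_jm := ltn_ord j.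
suff [i pij] : exists i : 'I_n, p i j by exact: deg_tr_gt0 pij.
have [lt_j3 | le_3j] := ltnP j 3.
  have lt_in : 0 < n by lia.
  by exists (Ordinal lt_in); rewrite star_setE /star_code /=; lia.
have [lt_jx | le_xj] := ltnP j (3 + 2 * x).
  have lt_in : (j - 1) %/ 2 < n by lia.
  by exists (Ordinal lt_in); rewrite star_setE /star_code /=; lia.
have lt_in : x + 1 + 2 * (j - 3 - 2 * x) < n by lia.
by exists (Ordinal lt_in); rewrite star_setE /star_code /=; lia.
Qed.

(* Rows 0..x are star centres (their columns are leaves), later rows are leaves. *)
Lemma star_code_star_forest : star_forest p.
Proof.
move=> i j pij; have lt_in := ltn_ord i; have lt_jm := ltn_ord j.
have [le_ix | lt_xi] := leqP i x.
  pose b := (i != 0 :> nat) * (2 * i + 1).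
  have lt_cm : b + (j == b :> nat) < m by lia.
  have col1 : deg (transpose p) j = 1.
    apply: (@deg_eq1 _ _ (transpose p) j i) => // r; rewrite /transpose !star_setE => code_rj.
    by apply: val_inj => /=; move: code_rj pij; rewrite star_setE /star_code; lia.
  have row_gt1 : 1 < deg p i.
    apply: (@deg_gt1 _ _ p i j (Ordinal lt_cm)) => //; last by rewrite -val_eqE /=; lia.
    by move: pij; rewrite !star_setE /star_code /=; lia.
  by rewrite col1 eqxx gtn_eqF.
have lt_rn : i + 1 - 2 * ((i - x - 1) %% 2) < n by lia.
have row1 : deg p i = 1.
  apply: (deg_eq1 pij) => c; rewrite star_setE => code_ic.
  by apply: val_inj => /=; move: code_ic pij; rewrite star_setE /star_code; lia.
have col_gt1 : 1 < deg (transpose p) j.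
  apply: (@deg_gt1 _ _ (transpose p) j i (Ordinal lt_rn)) => //; last by rewrite -val_eqE /=; lia.
  by move: pij; rewrite /transpose !star_setE /star_code /=; lia.
by rewrite row1 eqxx eq_sym gtn_eqF.
Qed.

Lemma star_code_dominating :
  3 <= x + y -> forall z, closed_nbhd (@KxK_adj n m) z :&: star_set != set0.
Proof.
move=> large [i j]; have lt_in := ltn_ord i; have lt_jm := ltn_ord j.
suff [i' [j' [ni nj pij']]] : exists (i' : 'I_n) (j' : 'I_m), [/\ i' != i, j' != j & p i' j'].
  by apply/set0Pn; exists (i', j'); rewrite in_setI KxK_nbhdE /= (negbTE ni) (negbTE nj).
have witness (a b : nat) (lt_an : a < n) (lt_bm : b < m) :
    a != i -> b != j -> star_code x a b -> exists i' j', [/\ i' != i, j' != j & p i' j'].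
  by move=> ni nj code_ab; exists (Ordinal lt_an), (Ordinal lt_bm); rewrite star_setE.
have [i0 | i_pos] := eqVneq (i : nat) 0.
  have [j3 | nj3] := eqVneq (j : nat) 3.
    by apply: (@witness (n - 1) (m - 1)); rewrite /star_code; lia.
  by apply: (@witness 1 3); rewrite /star_code; lia.
by apply: (@witness 0 (j == 0 :> nat)); rewrite /star_code; lia.
Qed.

Lemma star_code_idcode : 3 <= x + y -> is_idcode (@KxK_adj n m) star_set.
Proof.
move=> large; have lt0n : 0 < n by lia.
have lt0m : 0 < m by lia.
apply/(KxK_idcodeP star_set (Ordinal lt0n) (Ordinal lt0m)); split.
- exact: star_code_dominating.
- by move=> i k di; have := star_rows_nonempty i; rewrite di.
- by move=> j l dj; have := star_cols_nonempty j; rewrite dj.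
- apply: star_forest_box_free.
  + exact: star_rows_nonempty.
  + exact: star_cols_nonempty.
  + exact: star_code_star_forest.
Qed.

(* Points in the first 2x+3 columns are indexed by their column, the others by
   their row; this indexing into [0, 2x+2y+3) is injective on the code. *)
Lemma card_star_set : #|star_set| <= 2 * x + 2 * y + 3.
Proof.
pose index (z : 'I_n * 'I_m) : nat := if z.2 < 3 + 2 * x then (z.2 : nat) else z.1 + x + 2.
rewrite cardE -(size_map index) -(size_iota 0 (2 * x + 2 * y + 3)).
apply: uniq_leq_size => [|k /mapP [[i j]]].
  rewrite map_inj_in_uniq ?enum_uniq // => -[i1 j1] [i2 j2].
  rewrite !mem_enum !inE /index /star_code /= => code1 code2.
  have := ltn_ord i1; have := ltn_ord i2; have := ltn_ord j1; have := ltn_ord j2.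
  by case: ifP; case: ifP => * ; congr (_, _); apply: ord_inj; lia.
rewrite mem_enum inE mem_iota /index /star_code /= => code_ij ->.
by have := ltn_ord i; have := ltn_ord j; case: ifP; lia.
Qed.

End StarCode.

Lemma gammaID_le (T : finType) (adj : rel T) (C : {set T}) :
  is_idcode adj C -> gammaID adj <= #|C|.
Proof.
move=> codeC; rewrite /gammaID.
have : C \in index_enum {set T} by rewrite mem_index_enum.
elim: (index_enum _) => [//|D s IH]; rewrite inE big_cons.
have [<- _|nCD /= inCs] := eqVneq C D; first by rewrite codeC geq_minl.
case: (is_idcode adj D); last exact: IH.
exact: leq_trans (geq_minr _ _) (IH inCs).
Qed.

Lemma gammaID_ge (T : finType) (adj : rel T) b :
  b <= #|T|.+1 -> (forall C, is_idcode adj C -> b <= #|C|) -> b <= gammaID adj.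
Proof.
move=> le_bT lower; apply: (big_ind (fun k => b <= k)) => // k k' bk bk'.
by rewrite leq_min bk bk'.
Qed.

Theorem theorem5 (n m : nat) :
  6 <= n -> n <= m -> m <= 2 * n - 2 -> m != 2 * n - 5 ->
  (n + m) %% 3 = 1 ->
  gammaID (@KxK_adj n m) = (2 * m + 2 * n + 2) %/ 3.
Proof.
move=> n6 le_nm le_m2n ne_m2n mod3.
have [x [y [def_n def_m large]]] :
    exists x y, [/\ n = x + 2 * y + 1, m = 2 * x + y + 3 & 3 <= x + y].
  by exists ((2 * m - n - 5) %/ 3), ((2 * n - m + 1) %/ 3); split; lia.
apply/eqP; rewrite eqn_leq; apply/andP; split.
  apply: leq_trans (gammaID_le (star_code_idcode def_n def_m large)) _.
  by have := card_star_set def_n def_m; move: #|_| => k; lia.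
apply: gammaID_ge => [|C codeC]; last first.
  by have := KxK_idcode_lower_bound codeC n6 le_nm le_m2n ne_m2n mod3; move: #|C| => k; lia.
by rewrite card_prod !card_ord; nia.
Qed.
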